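(* Let $\ell,d_1,\dots,d_\ell\in\mathbb N$, let $\mathcal L=\{-\ell,\dots,-1,1,\dots,\ell\}$, set $e_i=\operatorname{sgn}(i)d_{|i|}$ for $i\in\mathcal L$, and for $S\subseteq\mathcal L$ put $e_S=\sum_{i\in S}e_i$. Fix $\beta\in\mathbb N$ and $b_1,\dots,b_\beta\in\mathbb N$. Then $$\sum_{S_1,\dots,S_\beta}\Bigl(\sum_{i=1}^\beta e_{S_i}\Bigr)^2$$ is an integral multiple of $\sum_{i\in\mathcal L}e_i^2$, where the outer sum runs over all tuples $(S_1,\dots,S_\beta)$ of subsets $S_i\subseteq\mathcal L$ with $|S_i|=b_i$. *)

From mathcomp Require Import all_boot all_order all_algebra.
Set Implicit Arguments. Unset Strict Implicit. Unset Printing Implicit Defensive.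
Import Order.TTheory GRing.Theory Num.Theory.
Local Open Scope ring_scope.

(* The signed index set L = {-l,...,-1,1,...,l} is encoded as bool * 'I_l:
   (true, j) stands for +(j+1) and (false, j) for -(j+1). *)
Definition Lidx (l : nat) := (bool * 'I_l)%type.

Definition e (l : nat) (d : 'I_l -> nat) (i : Lidx l) : int :=
  if i.1 then (d i.2)%:Z else - (d i.2)%:Z.

Definition eS (l : nat) (d : 'I_l -> nat) (S : {set Lidx l}) : int :=
  \sum_(i in S) e d i.

From mathcomp Require Import all_boot all_order all_algebra all_fingroup.
Import Order.TTheory GRing.Theory Num.Theory.
Set Implicit Arguments. Unset Strict Implicit. Unset Printing Implicit Defensive.
Local Open Scope ring_scope.

(* Writing occ S i for the number of indices j with i in S_j, the sum equals
   sum_{i,i'} c(i,i') e_i e_i' with c(i,i') = sum_S occ S i * occ S i'.  The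
   set of admissible tuples is stable under relabelling L by any permutation,
   so c is permutation invariant: c(i,i') = alpha if i = i' and gamma
   otherwise.  As sum_i e_i = 0, the gamma part contributes
   gamma (sum_i e_i)^2 = 0, leaving (alpha - gamma) sum_i e_i^2. *)

Definition occ (T I : finType) (S : {ffun I -> {set T}}) (i : T) : nat :=
  #|[set j | i \in S j]|.

Lemma sum_over_sets_occ (R : nmodType) (T I : finType)
    (S : {ffun I -> {set T}}) (w : T -> R) :
  \sum_(j : I) \sum_(i in S j) w i = \sum_(i : T) w i *+ occ S i.
Proof.
under eq_bigr do rewrite big_mkcond.
rewrite exchange_big; apply: eq_bigr => i _.
by rewrite -big_mkcond /= -sumr_const; apply: eq_bigl => j; rewrite inE.
Qed.

Lemma occ_imset (T I : finType) (f : T -> T) (S : {ffun I -> {set T}}) i :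
  injective f -> occ [ffun j => f @: S j] (f i) = occ S i.
Proof.
by move=> f_inj; apply: eq_card => j; rewrite !inE ffunE mem_imset.
Qed.

Lemma sum_sqr_lin_comb (R : comPzRingType) (T F : finType) (P : pred F)
    (m : F -> T -> nat) (x : T -> R) :
  \sum_(S | P S) (\sum_(i : T) x i *+ m S i) ^+ 2
  = \sum_(i : T) \sum_(i' : T)
      (\sum_(S | P S) m S i * m S i')%:R * (x i * x i').
Proof.
under eq_bigr do rewrite expr2 mulr_suml.
under eq_bigr do under eq_bigr do rewrite mulr_sumr.
rewrite exchange_big; apply: eq_bigr => i _.
rewrite exchange_big; apply: eq_bigr => i' _.
rewrite natr_sum mulr_suml; apply: eq_bigr => S _.
by rewrite natrM mulrACA !mulr_natl.
Qed.

Section PermInvariantForm.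

Variables (R : comPzRingType) (T : finType) (c : T -> T -> R).
Hypothesis c_perm : forall (s : {perm T}) i i', c (s i) (s i') = c i i'.

Lemma perm_invariant_kernel :
  exists alpha gamma, forall i i', c i i' = if i == i' then alpha else gamma.
Proof.
have c_diag i k : c i i = c k k by rewrite -(c_perm (tperm i k)) tpermL.
have c_off i i' k k' : i != i' -> k != k' -> c i i' = c k k'.
  move=> nii' nkk'; set u := tperm i k i'.
  have nuk : u != k by rewrite /u -{2}(tpermL i k) (inj_eq perm_inj) eq_sym.
  rewrite -(c_perm (tperm i k)) -/u tpermL.
  by rewrite -(c_perm (tperm u k')) tpermL tpermD // eq_sym.
case: (pickP (fun p : T * T => p.1 != p.2)) => [[k k'] /= nkk' | all_eq].
  exists (c k k), (c k k') => i i'.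
  by case: eqVneq => [<- | nii']; [exact: c_diag | exact: c_off].
case: (pickP (fun _ : T => true)) => [k _ | T0].
  2: by exists 0, 0 => i; have := T0 i.
exists (c k k), 0 => i i'; case: eqVneq => [<- | nii']; first exact: c_diag.
by have := all_eq (i, i'); rewrite /= nii'.
Qed.

Lemma perm_invariant_quadratic_form (x : T -> R) :
  \sum_(i : T) x i = 0 ->
  exists k, \sum_(i : T) \sum_(i' : T) c i i' * (x i * x i')
            = k * \sum_(i : T) x i ^+ 2.
Proof.
move=> sum_x0; have [alpha [gamma cE]] := perm_invariant_kernel.
exists (alpha - gamma); rewrite mulr_sumr; apply: eq_bigr => i _.
have cE' i' : c i i' = gamma + (alpha - gamma) * (i == i')%:R.
  by rewrite cE; case: eqVneq => _; rewrite ?mulr1 ?mulr0 ?addr0 // addrC subrK.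
under eq_bigr do rewrite cE' mulrDl.
rewrite big_split /= -mulr_sumr -mulr_sumr sum_x0 !mulr0 add0r.
rewrite (bigD1 i) //= big1 ?addr0 ?eqxx ?mulr1 ?expr2 //.
by move=> j /negbTE; rewrite eq_sym => ->; rewrite mulr0 mul0r.
Qed.

End PermInvariantForm.

Definition occ_corr (T I : finType) (b : I -> nat) (i i' : T) : nat :=
  \sum_(S : {ffun I -> {set T}} | [forall j, #|S j| == b j]) occ S i * occ S i'.

Lemma occ_corr_perm (T I : finType) (b : I -> nat) (s : {perm T}) i i' :
  occ_corr b (s i) (s i') = occ_corr b i i'.
Proof.
have s_inj : injective s := @perm_inj _ s.
rewrite /occ_corr (reindex_inj (h := fun S : {ffun I -> {set T}} =>
  [ffun j => s @: S j])); last first.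
  move=> S1 S2 /ffunP eqS; apply/ffunP => j.
  by have := eqS j; rewrite !ffunE; apply: imset_inj.
apply: eq_big => [S | S _]; last by rewrite !occ_imset.
by apply: eq_forallb => j; rewrite ffunE card_imset.
Qed.

Lemma sum_e0 l (d : 'I_l -> nat) : \sum_(i : Lidx l) e d i = 0.
Proof.
rewrite -(pair_big xpredT xpredT (fun s j => e d (s, j))) /= big_bool /=.
by rewrite /e /= sumrN subrr.
Qed.

Theorem lemma6p5 (l : nat) (d : 'I_l -> nat) (beta : nat) (b : 'I_beta -> nat) :
  exists k : int,
    \sum_(S : {ffun 'I_beta -> {set Lidx l}} | [forall j, #|S j| == b j])
        (\sum_(j < beta) eS d (S j)) ^+ 2
    = k * \sum_(i : Lidx l) (e d i) ^+ 2.
Proof.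
have c_perm (s : {perm Lidx l}) i i' :
    (occ_corr b (s i) (s i'))%:R = (occ_corr b i i')%:R :> int.
  by rewrite occ_corr_perm.
have [k form_k] := perm_invariant_quadratic_form c_perm (sum_e0 d).
exists k; rewrite -form_k -sum_sqr_lin_comb.
by apply: eq_bigr => S _; rewrite sum_over_sets_occ.
Qed.
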